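(* Consider a one-step MDP ($T=1$) with a single state $\mathcal{S}=\{s_0\}$, action space equal to the goal space $\mathcal{A}=\mathcal{G}$ with $|\mathcal{A}|=|\mathcal{G}|=k$, and reward $r(s,a,g)=\mathbb{I}[a=g]$. Let the policy be $\pi(a\mid s_0,g)=\exp(L_{a,g})/\sum_{b\in\mathcal{A}}\exp(L_{b,g})$ with logits $L_{a,g}$, let $p(g)=1/k$ for all $g$, and suppose $L_{a,g}\equiv L$ for all $a,g$ (some constant $L$). Let $\eta_{a,g}=r(s_0,b,g')\frac{\partial}{\partial L_{a,g}}\log\pi(b\mid s_0,g')$ with $g'\sim p(\cdot)$, $b\sim\pi(\cdot\mid s_0,g')$ be the one-sample on-policy REINFORCE estimator. Let the hindsight variational distribution $q_h$ (with an on-policy buffer) generate a pair $(b,g')$ as follows: sample $g\sim p(\cdot)$ and $b\sim\pi(\cdot\mid s_0,g)$, then choose the goal $g'$ for which the sampled action is rewarding, i.e. $r(s_0,b,g')=1$ (so $g'=b$). Define the normalized hindsight estimator $\eta^h_{a,g}=r(s_0,b,g')\,\frac{\partial}{\partial L_{a,g}}\log\pi(b\mid s_0,g')/k$ with $(b,g')\sim q_h$. For a random variable $x$ define $\mathrm{MSE}[x]:=\mathbb{E}[(x-\mathbb{E}[\eta_{a,g}])^2]$. Then for every $a\in\mathcal{A}$ and $g\in\mathcal{G}$, as $k\to\infty$, $$\frac{\sqrt{\mathrm{MSE}[\eta^h_{a,g}]}}{\big|\mathbb{E}[\eta_{a,g}]\big|}=\sqrt{k}\,(1+o(1)).$$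
   Context: $o(1)$ denotes a quantity tending to $0$ as $k\to\infty$. *)

From HB Require Import structures.
From mathcomp Require Import all_boot all_order all_algebra.
From mathcomp Require Import all_classical all_reals all_analysis.
Set Implicit Arguments. Unset Strict Implicit. Unset Printing Implicit Defensive.
Import Order.TTheory GRing.Theory Num.Theory.
Local Open Scope ring_scope.

Section HER.
Variable R : realType.
Variable k : nat.

(* Logits L_{a,g}: first argument the action a, second the goal g.
   Actions = goals = 'I_k, single state s0 (left implicit). *)
Definition logits := 'I_k -> 'I_k -> R.

Definition reward (a g : 'I_k) : R := (a == g)%:R.

Definition policy (L : logits) (b g : 'I_k) : R :=
  expR (L b g) / \sum_(c < k) expR (L c g).

Definition pgoal (g : 'I_k) : R := k%:R^-1.

Definition perturb (L : logits) (a g : 'I_k) (t : R) : logits :=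
  fun b h => L b h + (if (b == a) && (h == g) then t else 0).

Definition score (L : logits) (a g b g' : 'I_k) : R :=
  derive1 (fun t : R => ln (policy (perturb L a g t) b g')) 0.

Definition eta (L : logits) (a g b g' : 'I_k) : R :=
  reward b g' * score L a g b g'.

Definition E_eta (L : logits) (a g : 'I_k) : R :=
  \sum_(g' < k) \sum_(b < k) pgoal g' * policy L b g' * eta L a g b g'.

Definition eta_h (L : logits) (a g b g' : 'I_k) : R :=
  reward b g' * score L a g b g' / k%:R.

(* hindsight relabeling: the goal for which action b is rewarding (g' = b) *)
Definition relabel (b : 'I_k) : 'I_k := b.

Definition MSE_h (L : logits) (a g : 'I_k) : R :=
  \sum_(g0 < k) \sum_(b < k)
    pgoal g0 * policy L b g0 * (eta_h L a g b (relabel b) - E_eta L a g) ^+ 2.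

Definition her_ratio (L : logits) (a g : 'I_k) : R :=
  Num.sqrt (MSE_h L a g) / `|E_eta L a g|.

End HER.

From Pilot Require Import Defs.
From HB Require Import structures.
From mathcomp Require Import all_boot all_order all_algebra.
From mathcomp Require Import all_classical all_reals all_analysis.
From mathcomp Require Import ring.
Import Order.TTheory GRing.Theory Num.Theory.
Import numFieldNormedType.Exports.
Local Open Scope classical_set_scope.
Local Open Scope ring_scope.

(* At uniform logits the policy is uniform and the softmax score is
   [g' = g] ([b = a] - 1/k), so E[eta_{a,g}] = k^-2 ([g = a] - 1/k) is nonzero
   for k >= 2.  Relabelling makes every hindsight sample rewarded, so eta^h
   equals k E[eta] when the sampled action is g (probability 1/k) and 0
   otherwise.  Hence MSE[eta^h] = (k - 1) E[eta]^2, and the ratio is exactly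
   sqrt (k - 1) = sqrt k * sqrt (1 - 1/k). *)

Lemma ord_gt0 {n : nat} (i : 'I_n) : (0 < n)%N.
Proof. exact: leq_ltn_trans (leq0n i) (ltn_ord i). Qed.

Lemma sumr_support1 {V : nmodType} {I : finType} (j : I) (F : I -> V) :
  (forall i, i != j -> F i = 0) -> \sum_i F i = F j.
Proof. by move=> F0; rewrite (bigD1 j) //= big1 ?addr0. Qed.

Section SoftmaxScore.
Variables (R : realType) (k : nat).

Lemma is_derive_affine (a b x : R) : is_derive x 1 (fun t => a + b * t) b.
Proof.
have := is_deriveD (is_derive_cst a x 1) (is_deriveZ b (is_derive_id x 1)).
by move=> /is_derive_eq; apply; rewrite add0r; exact: mulr1.
Qed.

Lemma sum_expR_gt0 (u : 'I_k -> R) : (0 < k)%N -> 0 < \sum_c expR (u c).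
Proof.
move=> k_gt0; rewrite (bigD1 (Ordinal k_gt0)) //=.
by apply: ltr_wpDr; [apply: sumr_ge0 => c _; exact/ltW/expR_gt0 | exact: expR_gt0].
Qed.

Lemma is_derive_logsumexp (u v : 'I_k -> R) : (0 < k)%N ->
  is_derive (0 : R) 1 (fun t : R => ln (\sum_c expR (u c + v c * t)))
    ((\sum_c v c * expR (u c)) / \sum_c expR (u c)).
Proof.
move=> k_gt0.
have dS : is_derive (0 : R) 1 (fun t : R => \sum_c expR (u c + v c * t))
    (\sum_c expR (u c + v c * 0) * v c).
  rewrite -(fct_sumE _ _ (fun c t => expR (u c + v c * t))).
  apply: is_derive_sum => c.
  exact: (is_derive1_comp (f := @expR R) (is_derive_expR _) (is_derive_affine _ _ _)).
have := is_derive1_comp (f := @ln R) (is_derive1_ln (sum_expR_gt0 _ k_gt0)) dS.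
move=> /is_derive_eq; apply.
rewrite mulrC; under eq_bigr do rewrite mulr0 addr0 mulrC.
by under [X in X^-1]eq_bigr do rewrite mulr0 addr0.
Qed.

Lemma score_softmax (L : logits R k) (a g b g' : 'I_k) :
  score L a g b g' = (g' == g)%:R * ((b == a)%:R - policy L a g).
Proof.
have k_gt0 := ord_gt0 a.
rewrite /score; have [->|neq_g] := eqVneq g' g; last first.
  rewrite mul0r (_ : (fun t => _) = cst (ln (policy L b g'))) ?derive1_cst //.
  apply/funext => t; rewrite /policy /perturb (negbTE neq_g) andbF addr0.
  by under eq_bigr do rewrite andbF addr0.
have perturbE t c : perturb L a g t c g = L c g + (c == a)%:R * t.
  by rewrite /perturb eqxx andbT; case: (c == a); rewrite ?mul1r ?mul0r.
rewrite (_ : (fun t => _) = fun t => (L b g + (b == a)%:R * t)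
                 - ln (\sum_c expR (L c g + (c == a)%:R * t))); last first.
  apply/funext => t; rewrite /policy perturbE; under eq_bigr do rewrite perturbE.
  by rewrite ln_div ?posrE ?expR_gt0 ?sum_expR_gt0 // expRK.
have := is_deriveB (is_derive_affine (L b g) (b == a)%:R 0)
                   (is_derive_logsumexp (L^~ g) (fun c => (c == a)%:R) k_gt0).
move=> dlogpi; rewrite derive1E (@derive_val _ _ _ _ _ _ _ dlogpi) mul1r.
rewrite (sumr_support1 a) => [|c /negbTE ->]; last by rewrite mul0r.
by rewrite eqxx mul1r.
Qed.

Lemma E_eta_softmax (L : logits R k) (a g : 'I_k) :
  E_eta L a g = k%:R^-1 * policy L g g * ((g == a)%:R - policy L a g).
Proof.
rewrite /E_eta /Defs.eta /reward.
under eq_bigr => g' _.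
  rewrite (sumr_support1 g') => [|b /negbTE ->]; last by rewrite !mul0r mulr0.
  over.
rewrite (sumr_support1 g) => [|g' neq_g]; last first.
  by rewrite score_softmax (negbTE neq_g) !mul0r !mulr0.
by rewrite score_softmax !eqxx !mul1r.
Qed.

End SoftmaxScore.

Section ConstantLogits.
Variables (R : realType) (k : nat) (L0 : R).
Local Notation Lc := (fun _ _ : 'I_k => L0).

Lemma policy_cst (b g : 'I_k) : policy Lc b g = k%:R^-1.
Proof.
rewrite /policy sumr_const card_ord -[_ *+ k]mulr_natr invfM mulrA mulfV ?mul1r //.
by rewrite gt_eqF ?expR_gt0.
Qed.

Lemma E_eta_cst (a g : 'I_k) :
  E_eta Lc a g = k%:R^-1 * k%:R^-1 * ((g == a)%:R - k%:R^-1).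
Proof. by rewrite E_eta_softmax !policy_cst. Qed.

Lemma eta_h_relabel_cst (a g b : 'I_k) :
  eta_h Lc a g b (relabel b) = (b == g)%:R * (k%:R * E_eta Lc a g).
Proof.
have k_neq0 : k%:R != 0 :> R by rewrite pnatr_eq0 -lt0n (ord_gt0 a).
rewrite /eta_h /relabel /reward eqxx score_softmax E_eta_cst policy_cst.
have [->|_] := eqVneq b g; last by rewrite mul0r mulr0 mul0r mul0r.
by rewrite !mul1r !mulrA mulfV // mul1r mulrC.
Qed.

Lemma MSE_h_cst (a g : 'I_k) :
  MSE_h Lc a g = E_eta Lc a g ^+ 2 * k.-1%:R.
Proof.
have k_gt0 := ord_gt0 a.
rewrite /MSE_h; set E := E_eta _ a g.
under eq_bigr do under eq_bigr do rewrite /pgoal policy_cst eta_h_relabel_cst.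
rewrite sumr_const card_ord (bigD1 g) //= eqxx mul1r.
rewrite -/E (eq_bigr (fun _ => k%:R^-1 / k%:R * E ^+ 2)); last first.
  by move=> b /negbTE ->; rewrite mul0r sub0r sqrrN.
rewrite sumr_const cardC1 card_ord -[_ *+ k.-1]mulr_natr -[_ *+ k]mulr_natr.
have -> : k%:R = k.-1%:R + 1 :> R by rewrite natr1 prednK.
have : k.-1%:R + 1 != 0 :> R by rewrite natr1 pnatr_eq0.
by move: (k.-1%:R : R) => m m1_neq0; field.
Qed.

Lemma her_ratio_cst (a g : 'I_k) : (1 < k)%N ->
  her_ratio Lc a g = Num.sqrt k.-1%:R.
Proof.
move=> k_gt1.
have k_neq0 : k%:R != 0 :> R by rewrite pnatr_eq0 -lt0n ltnW.
have E_neq0 : `|E_eta Lc a g| != 0.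
  rewrite E_eta_cst normr_eq0 !mulf_neq0 ?invr_eq0 // subr_eq0.
  case: (g == a); rewrite eq_sym ?invr_eq0 //.
  by rewrite invr_eq1 pnatr_eq1 gtn_eqF.
by rewrite /her_ratio MSE_h_cst sqrtrM ?sqr_ge0 // sqrtr_sqr mulrAC divff // mul1r.
Qed.

End ConstantLogits.

Lemma cvg_sqrt_1_sub_inv (R : realType) :
  (fun n : nat => Num.sqrt (1 - n%:R^-1) : R) @ \oo --> (1 : R).
Proof.
rewrite -cvg_shiftS.
have := cvg_comp _ _ (cvgB (cvg_cst (1 : R)) cvg_harmonic) (@sqrt_continuous R _).
by rewrite subr0 sqrtr1; apply.
Qed.

Theorem theorem2 (R : realType) (L : R) :
  exists eps : nat -> R, eps @ \oo --> 0 /\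
    \forall k \near \oo, forall a g : 'I_k,
      her_ratio (fun _ _ => L) a g = Num.sqrt (k%:R) * (1 + eps k).
Proof.
exists (fun k => Num.sqrt (1 - k%:R^-1) - 1); split.
  by rewrite -(subrr 1); apply: cvgB; [exact: cvg_sqrt_1_sub_inv | exact: cvg_cst].
exists 2%N => // k /= k_gt1 a g.
have k_neq0 : k%:R != 0 :> R by rewrite pnatr_eq0 -lt0n ltnW.
rewrite her_ratio_cst // addrC subrK -sqrtrM ?ler0n // mulrBr mulr1 mulfV //.
by rewrite -subn1 natrB // ltnW.
Qed.
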